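(* For $1<\alpha<\infty$, the norm of the Ces\`aro operator on the $\alpha$-Bloch space satisfies $\|\mathcal{C}\|_{\mathcal{B}^\alpha\to\mathcal{B}^\alpha}\ge\frac32$.
   Context: $\mathbb{D}$ is the open unit disc and $H(\mathbb{D})$ the space of analytic functions on $\mathbb{D}$. For $f(z)=\sum_{k\ge0}a_kz^k\in H(\mathbb{D})$ the Ces\`aro operator is $\mathcal{C}(f)(z)=\sum_{n\ge0}\Big(\frac{1}{n+1}\sum_{k=0}^n a_k\Big)z^n=\int_0^1\frac{f(tz)}{1-tz}\,dt$. For $\alpha>0$ the $\alpha$-Bloch space $\mathcal{B}^\alpha$ consists of $f\in H(\mathbb{D})$ with $\sup_{z\in\mathbb{D}}(1-|z|^2)^\alpha|f'(z)|<\infty$, normed by $\|f\|_{\mathcal{B}^\alpha}=|f(0)|+\sup_{z\in\mathbb{D}}(1-|z|^2)^\alpha|f'(z)|$. Operator norms are $\|\mathcal{C}\|_{X\to Y}=\sup\{\|\mathcal{C}f\|_Y:\|f\|_X\le 1\}$. *)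

From Stdlib Require Import Reals.
From Coquelicot Require Import Coquelicot.
Open Scope R_scope.

Definition in_disc (z : C) : Prop := Cmod z < 1.

Definition analytic_on_disc (f : C -> C) : Prop :=
  forall z : C, in_disc z -> exists l : C,
    @is_derive C_AbsRing C_NormedModule f z l.

Definition bloch_sup (alpha : R) (f : C -> C) : Rbar :=
  Lub_Rbar (fun x : R => exists z l : C, in_disc z /\
     @is_derive C_AbsRing C_NormedModule f z l /\
     x = Rpower (1 - (Cmod z) ^ 2) alpha * Cmod l).

Definition bloch_norm (alpha : R) (f : C -> C) : Rbar :=
  Rbar_plus (Finite (Cmod (f 0%R))) (bloch_sup alpha f).

Definition cesaro (f : C -> C) (z : C) : C :=
  @RInt C_R_CompleteNormedModule
    (fun t : R => Cdiv (f (Cmult (RtoC t) z)) (Cminus (RtoC 1) (Cmult (RtoC t) z)))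
    0 1.

Definition cesaro_opnorm (alpha : R) : Rbar :=
  Rbar_lub (fun x : Rbar => exists f : C -> C, analytic_on_disc f /\
     Rbar_le (bloch_norm alpha f) (Finite 1) /\ x = bloch_norm alpha (cesaro f)).

(* The constant function 1 has Bloch norm 1 for every weight, and
   C(1)(z) = -log(1 - z)/z = 1 + z/2 + O(z^2).  Hence the Bloch norm of C(1)
   is at least |C(1)(0)| + (1 - 0)^alpha |C(1)'(0)| = 1 + 1/2.  The expansion
   of C(1) at 0 comes from integrating 1/(1 - tz) = 1 + tz + O(|z|^2) over
   t in [0, 1]. *)
From Stdlib Require Import Reals Lra.
From Coquelicot Require Import Coquelicot.
Open Scope R_scope.

Notation CR := C_R_CompleteNormedModule.

Lemma C_R_norm (u : C) : @norm _ CR u = Cmod u.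
Proof.
  destruct u as [a b]. unfold norm; simpl. unfold prod_norm, Cmod; simpl.
  change (norm a) with (Rabs a). change (norm b) with (Rabs b).
  rewrite !Rmult_1_r, <- !Rabs_mult, !Rabs_pos_eq by nra. reflexivity.
Qed.

Lemma C_R_minus (u v : C) : @minus CR u v = (u - v)%C.
Proof. destruct u, v. reflexivity. Qed.

Lemma C_R_scal (t : R) (u : C) : @scal _ CR t u = (t * u)%C.
Proof.
  destruct u. unfold scal; simpl. unfold prod_scal, Cmult, RtoC; simpl.
  unfold scal; simpl. unfold mult; simpl. f_equal; ring.
Qed.

Lemma is_RInt_scal_id_01 (y : C) :
  is_RInt (V:=CR) (fun t => scal t y) 0 1 (scal (1/2) y).
Proof.
  assert (Hderiv : forall t, Rmin 0 1 <= t <= Rmax 0 1 ->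
            is_derive (fun s : R => s ^ 2 / 2) t t).
  { intros t _. auto_derive; [exact I | field]. }
  pose proof (is_RInt_scal_derive (V:=CR) (fun s => s ^ 2 / 2) (fun _ => y)
                (fun s => s) (fun _ => zero) 0 1 Hderiv
                (fun t _ => is_derive_const _ _) (fun t _ => continuous_id t)
                (fun t _ => continuous_const _ _)) as H.
  cbv beta in H.
  replace (scal (1/2) y) with (minus (scal (1 ^ 2 / 2) y) (scal (0 ^ 2 / 2) y)).
  - eapply is_RInt_ext; [|exact H]. intros t _. destruct y as [a b].
    unfold plus, scal, zero; simpl. unfold prod_plus, prod_scal, prod_zero; simpl.
    unfold plus, scal, zero; simpl. f_equal; unfold mult; simpl; ring.
  - rewrite C_R_minus, !C_R_scal. apply injective_projections; simpl; field.
Qed.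

Lemma Cinv_one_minus_taylor (w : C) :
  Cmod w <= 1/2 -> Cmod (1 / (1 - w) - 1 - w)%C <= 2 * (Cmod w * Cmod w).
Proof.
  intros Hw.
  assert (Hden : 1/2 <= Cmod (1 - w)%C).
  { pose proof (Cmod_triangle (1 - w)%C w) as Htri.
    replace (1 - w + w)%C with (RtoC 1) in Htri by ring.
    rewrite Cmod_1 in Htri. lra. }
  assert (Hnz : (1 - w)%C <> RtoC 0).
  { intro E. rewrite E, Cmod_0 in Hden. lra. }
  replace (1 / (1 - w) - 1 - w)%C with (w * w / (1 - w))%C by (field; exact Hnz).
  rewrite Cmod_div, Cmod_mult by exact Hnz.
  pose proof (Cmod_ge_0 w).
  apply Rle_trans with (Cmod w * Cmod w / (1/2)).
  - apply Rmult_le_compat_l; [nra|]. apply Rinv_le_contravar; lra.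
  - right. field.
Qed.

Definition cesaro_kernel (z : C) (t : R) : C := (1 / (1 - t * z))%C.

Lemma cesaro_one_RInt (z : C) :
  cesaro (fun _ => RtoC 1) z = RInt (V:=CR) (cesaro_kernel z) 0 1.
Proof. reflexivity. Qed.

Lemma ex_RInt_cesaro_kernel (z : C) :
  Cmod z < 1 -> ex_RInt (V:=CR) (cesaro_kernel z) 0 1.
Proof.
  intros Hz. destruct z as [a b].
  assert (Ha : Rabs a < 1) by (eapply Rle_lt_trans; [apply (re_le_Cmod (a, b)) | exact Hz]).
  apply (ex_RInt_fct_extend_pair (U:=R_NormedModule) (V:=R_NormedModule));
    apply (ex_RInt_continuous (V:=R_CompleteNormedModule));
    rewrite Rmin_left, Rmax_right by lra; intros t Ht;
    apply (ex_derive_continuous (K:=R_AbsRing) (V:=R_NormedModule));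
    unfold cesaro_kernel, Cdiv, Cminus, Cmult, Cinv, RtoC, Copp, Cplus; simpl;
    auto_derive.
  all: assert (t * a < 1) by (apply Rabs_def2 in Ha; nra);
    split; [|split; [|exact I]]; nra.
Qed.

Lemma cesaro_one_taylor (z : C) : Cmod z <= 1/2 ->
  Cmod (cesaro (fun _ => RtoC 1) z - 1 - RtoC (1/2) * z)%C <= 2 * (Cmod z * Cmod z).
Proof.
  intros Hz. rewrite cesaro_one_RInt.
  pose proof (RInt_correct _ _ _ (ex_RInt_cesaro_kernel z ltac:(lra))) as Hker.
  pose proof (is_RInt_minus _ _ _ _ _ _
                (is_RInt_minus _ _ _ _ _ _ Hker (is_RInt_const (V:=CR) 0 1 (RtoC 1)))
                (is_RInt_scal_id_01 z)) as Hdiff.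
  assert (Hpointwise : forall t, 0 <= t <= 1 ->
    @norm _ CR (@minus CR (@minus CR (cesaro_kernel z t) (RtoC 1)) (@scal _ CR t z))
      <= 2 * (Cmod z * Cmod z)).
  { intros t Ht.
    rewrite C_R_norm, !C_R_minus, C_R_scal.
    assert (Htz : Cmod (t * z)%C <= Cmod z).
    { rewrite Cmod_mult, Cmod_R, Rabs_pos_eq by lra.
      pose proof (Cmod_ge_0 z). nra. }
    eapply Rle_trans; [apply Cinv_one_minus_taylor; lra|].
    pose proof (Cmod_ge_0 (t * z)%C). nra. }
  pose proof (norm_RInt_le_const _ _ _ _ _ Rle_0_1 Hpointwise Hdiff) as Hbound.
  rewrite C_R_norm, !C_R_minus, !C_R_scal, Rminus_0_r, Rmult_1_l in Hbound.
  replace (RtoC 1) with (RtoC 1 * RtoC 1)%C at 1 by ring.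
  exact Hbound.
Qed.

Section TaylorBound.

Variables (g : C -> C) (a b : C) (r K : R).
Hypothesis r_pos : 0 < r.
Hypothesis taylor_bound :
  forall z, Cmod z <= r -> Cmod (g z - a - b * z)%C <= K * (Cmod z * Cmod z).

Lemma taylor_bound_value_0 : g (RtoC 0) = a.
Proof.
  pose proof (taylor_bound (RtoC 0)) as H0. rewrite Cmod_0, !Rmult_0_r in H0.
  assert (E : Cmod (g (RtoC 0) - a - b * RtoC 0)%C = 0).
  { apply Rle_antisym; [apply H0; lra | apply Cmod_ge_0]. }
  apply Cmod_eq_0 in E.
  replace (g (RtoC 0)) with ((g (RtoC 0) - a - b * RtoC 0) + a + b * RtoC 0)%C by ring.
  rewrite E. ring.
Qed.

Lemma taylor_bound_is_derive_0 : @is_derive C_AbsRing C_NormedModule g (RtoC 0) b.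
Proof.
  split; [apply is_linear_scal_l|].
  intros x Hx.
  apply (is_filter_lim_locally_unique (K:=C_AbsRing) (V:=AbsRing_NormedModule C_AbsRing))
    in Hx.
  subst x. intros eps.
  apply (locally_le_locally_norm (K:=C_AbsRing) (V:=AbsRing_NormedModule C_AbsRing)).
  destruct eps as [eps Heps]; simpl.
  assert (Hdelta : 0 < Rmin r (eps / (Rabs K + 1))).
  { apply Rmin_glb_lt; [lra|]. pose proof (Rabs_pos K).
    apply Rdiv_lt_0_compat; lra. }
  exists (mkposreal _ Hdelta). intros z Hz. change C in z. unfold ball_norm in Hz. simpl in Hz.
  change (Cmod (z - RtoC 0)%C < Rmin r (eps / (Rabs K + 1))) in Hz.
  change (Cmod (g z - g (RtoC 0) - (z - RtoC 0) * b)%C <= eps * Cmod (z - RtoC 0)%C).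
  rewrite taylor_bound_value_0.
  replace (z - RtoC 0)%C with z in * by ring.
  replace ((z * b)%C) with ((b * z)%C) by ring.
  assert (Hzr : Cmod z <= r) by (pose proof (Rmin_l r (eps / (Rabs K + 1))); lra).
  assert (Hzeps : Cmod z * (Rabs K + 1) <= eps).
  { pose proof (Rmin_r r (eps / (Rabs K + 1))). pose proof (Rabs_pos K).
    apply Rle_trans with (eps / (Rabs K + 1) * (Rabs K + 1)); [nra|].
    right. field. lra. }
  pose proof (taylor_bound z Hzr). pose proof (Cmod_ge_0 z).
  pose proof (Rle_abs K). pose proof (Rabs_pos K). nra.
Qed.

End TaylorBound.

Lemma cesaro_one_0 : cesaro (fun _ => RtoC 1) (RtoC 0) = RtoC 1.
Proof.
  apply (taylor_bound_value_0 _ _ (RtoC (1/2)) (1/2) 2); [lra | exact cesaro_one_taylor].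
Qed.

Lemma is_derive_cesaro_one_0 :
  @is_derive C_AbsRing C_NormedModule (cesaro (fun _ => RtoC 1)) (RtoC 0) (RtoC (1/2)).
Proof.
  apply (taylor_bound_is_derive_0 _ (RtoC 1) _ (1/2) 2); [lra | exact cesaro_one_taylor].
Qed.

Lemma bloch_sup_ge_derive_0 (alpha : R) (f : C -> C) (l : C) :
  @is_derive C_AbsRing C_NormedModule f (RtoC 0) l ->
  Rbar_le (Finite (Cmod l)) (bloch_sup alpha f).
Proof.
  intros Hl. unfold bloch_sup. apply (proj1 (Lub_Rbar_correct _)).
  exists (RtoC 0), l. split; [unfold in_disc; rewrite Cmod_0; lra|]. split; [exact Hl|].
  rewrite Cmod_0. replace (1 - 0 ^ 2) with 1 by ring.
  unfold Rpower. rewrite ln_1, Rmult_0_r, exp_0. ring.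
Qed.

Lemma bloch_norm_ge_value_derive_0 (alpha : R) (f : C -> C) (l : C) :
  @is_derive C_AbsRing C_NormedModule f (RtoC 0) l ->
  Rbar_le (Finite (Cmod (f (RtoC 0)) + Cmod l)) (bloch_norm alpha f).
Proof.
  intros Hl. pose proof (bloch_sup_ge_derive_0 alpha f l Hl) as Hsup.
  unfold bloch_norm. destruct (bloch_sup alpha f); simpl in *; lra.
Qed.

Lemma is_derive_const_C (c z : C) :
  @is_derive C_AbsRing C_NormedModule (fun _ => c) z (RtoC 0).
Proof. exact (is_derive_const (K:=C_AbsRing) (V:=C_NormedModule) c z). Qed.

Lemma analytic_on_disc_const (c : C) : analytic_on_disc (fun _ => c).
Proof. intros z _. exists (RtoC 0). apply is_derive_const_C. Qed.

Lemma bloch_sup_const (alpha : R) (c : C) : bloch_sup alpha (fun _ => c) = Finite 0.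
Proof.
  apply Rbar_le_antisym.
  - unfold bloch_sup. apply (proj2 (Lub_Rbar_correct _)).
    intros x [z [l [_ [Hl ->]]]].
    assert (El : l = RtoC 0).
    { rewrite <- (is_C_derive_unique _ _ _ Hl).
      exact (is_C_derive_unique _ _ _ (is_derive_const_C c z)). }
    rewrite El, Cmod_0, Rmult_0_r. apply Rbar_le_refl.
  - rewrite <- Cmod_0. apply bloch_sup_ge_derive_0, is_derive_const_C.
Qed.

Lemma bloch_norm_const (alpha : R) (c : C) : bloch_norm alpha (fun _ => c) = Finite (Cmod c).
Proof. unfold bloch_norm. rewrite bloch_sup_const. simpl. f_equal. ring. Qed.

Lemma cesaro_opnorm_ge (alpha : R) (f : C -> C) :
  analytic_on_disc f -> Rbar_le (bloch_norm alpha f) (Finite 1) ->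
  Rbar_le (bloch_norm alpha (cesaro f)) (cesaro_opnorm alpha).
Proof.
  intros Hf Hnorm. unfold cesaro_opnorm, Rbar_lub.
  apply (proj1 (proj2_sig (Rbar_ex_lub _))). exists f. auto.
Qed.

Theorem theorem6p3 (alpha : R) (Halpha : 1 < alpha) :
  Rbar_le (Finite (3 / 2)) (cesaro_opnorm alpha).
Proof.
  apply Rbar_le_trans with (bloch_norm alpha (cesaro (fun _ => RtoC 1))).
  - pose proof (bloch_norm_ge_value_derive_0 alpha _ _ is_derive_cesaro_one_0) as H.
    rewrite cesaro_one_0, Cmod_1, Cmod_R, Rabs_pos_eq in H by lra.
    replace (3 / 2) with (1 + 1 / 2) by field. exact H.
  - apply cesaro_opnorm_ge; [apply analytic_on_disc_const|].
    rewrite bloch_norm_const, Cmod_1. apply Rbar_le_refl.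
Qed.
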